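(* Let $(\mathbb{P},\le,f)$ be a forcing property for $\mathcal{L}_A$ and $G$ a generic set. For every $\varphi\in\mathcal{L}_A^s(C)$, $(\neg\varphi)^G=1-\varphi^G$.
   Context: $\mathcal{L}$ is a countable continuous signature; formulas of $\mathcal{L}_{\omega_1,\omega}$ are built from atomic formulas using $\neg$, $\tfrac12$, $\dotplus$, countable conjunctions $\bigwedge$ and $\inf_x$. $\mathcal{L}_A$ is a countable fragment, $C=\{c_i:i<\omega\}$ new constants, $\mathcal{L}_A(C)$ the smallest countable fragment of $\mathcal{L}_{\omega_1,\omega}(C)$ containing $\mathcal{L}_A$, $\mathcal{L}_A^s(C)$ its sentences, $\mathcal{L}_A^{as}(C)$ its atomic sentences, $\mathcal{T}(C)$ closed terms. A forcing property $(\mathbb{P},\le,f)$: poset with $f_p\colon\mathcal{L}_A^{as}(C)\to[0,1]$ such that (1) $p\le q\Rightarrow f_p\le f_q$; (2) for every $p$, $\varepsilon>0$, $\tau,\sigma\in\mathcal{T}(C)$, atomic $\varphi(x)$ there are $q\le p$, $c\in C$ with $f_q(d(\tau,c))<\varepsilon$, $f_q(d(\tau,\sigma))<f_p(d(\sigma,\tau))+\varepsilon$, and if $f_p(d(\tau,\sigma))<\delta_{\varphi,x}(\varepsilon)$ then $f_q(\varphi(\sigma))<f_p(\varphi(\tau))+\varepsilon$. $F_p$: $f_p$ on atomics; $F_p(\neg\varphi)=1-\inf_{q\le p}F_q(\varphi)$; $F_p(\tfrac12\varphi)=\tfrac12F_p(\varphi)$; $F_p(\varphi\dotplus\psi)=\min(F_p(\varphi)+F_p(\psi),1)$;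 $F_p(\bigwedge\Phi)=\inf_{\varphi\in\Phi}F_p(\varphi)$; $F_p(\inf_x\varphi)=\inf_{c\in C}F_p(\varphi(c))$. $G\subseteq\mathbb{P}$ is generic if nonempty, downward directed, upward closed, and for every sentence $\varphi$ and $r>1$ some $p\in G$ has $F_p(\varphi)+F_p(\neg\varphi)<r$. $\varphi^G:=\inf_{p\in G}F_p(\varphi)$. *)

From HB Require Import structures.
From mathcomp Require Import all_boot all_order all_algebra.
From mathcomp Require Import classical_sets reals.
Set Implicit Arguments. Unset Strict Implicit. Unset Printing Implicit Defensive.
Import Order.TTheory GRing.Theory Num.Theory.
Local Open Scope classical_set_scope.
Local Open Scope ring_scope.

(* A (continuous) signature: function and relation symbols with arities.
   The metric symbol d is built into the atomic formulas. *)
Record signature := Signature {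
  funs : Type; farity : funs -> nat;
  rels : Type; rarity : rels -> nat }.

Definition countable_sig (L : signature) :=
  (exists g : funs L -> nat, injective g) /\ (exists g : rels L -> nat, injective g).

Section Syntax.
Variable L : signature.

(* Terms of L(C): variables x_n, new constants c_i (TC i), function applications. *)
Inductive term : Type :=
| TV : nat -> term
| TC : nat -> term
| TF : forall f : funs L, ('I_(farity f) -> term) -> term.

Inductive atomic : Type :=
| AD : term -> term -> atomic
| AR : forall r : rels L, ('I_(rarity r) -> term) -> atomic.

Inductive formula : Type :=
| Atom : atomic -> formula
| Neg : formula -> formula
| Half : formula -> formula
| Plus : formula -> formula -> formula
| Conj : (nat -> formula) -> formula
| Inf : nat -> formula -> formula.

Fixpoint occurs (y : nat) (t : term) : Prop :=
  match t with
  | TV z => z = y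
  | TC _ => False
  | TF f ts => exists i, occurs y (ts i)
  end.

Fixpoint noC_term (t : term) : Prop :=
  match t with
  | TV _ => True
  | TC _ => False
  | TF f ts => forall i, noC_term (ts i)
  end.

Definition closed_term (t : term) := forall y, ~ occurs y t.

Fixpoint tsubst (s : nat -> term) (t : term) : term :=
  match t with
  | TV y => s y
  | TC i => TC i
  | TF f ts => TF (fun i => tsubst s (ts i))
  end.

Definition occurs_atomic y (a : atomic) : Prop :=
  match a with
  | AD t1 t2 => occurs y t1 \/ occurs y t2
  | AR r ts => exists i, occurs y (ts i)
  end.

Definition noC_atomic (a : atomic) : Prop :=
  match a with
  | AD t1 t2 => noC_term t1 /\ noC_term t2
  | AR r ts => forall i, noC_term (ts i)
  end.

Definition asubst (s : nat -> term) (a : atomic) : atomic :=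
  match a with
  | AD t1 t2 => AD (tsubst s t1) (tsubst s t2)
  | AR r ts => @AR r (fun i => tsubst s (ts i))
  end.

Definition update (s : nat -> term) (x : nat) (t : term) : nat -> term :=
  fun y => if y == x then t else s y.

Definition asubst1 (x : nat) (t : term) (a : atomic) := asubst (update TV x t) a.

Fixpoint free (x : nat) (phi : formula) : Prop :=
  match phi with
  | Atom a => occurs_atomic x a
  | Neg p | Half p => free x p
  | Plus p q => free x p \/ free x q
  | Conj ps => exists n, free x (ps n)
  | Inf y p => y <> x /\ free x p
  end.

Definition sentence (phi : formula) := forall x, ~ free x phi.

Fixpoint noC_form (phi : formula) : Prop :=
  match phi with
  | Atom a => noC_atomic a
  | Neg p | Half p => noC_form p
  | Plus p q => noC_form p /\ noC_form q
  | Conj ps => forall n, noC_form (ps n)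
  | Inf _ p => noC_form p
  end.

Fixpoint fsubst (x : nat) (t : term) (phi : formula) : formula :=
  match phi with
  | Atom a => Atom (asubst1 x t a)
  | Neg p => Neg (fsubst x t p)
  | Half p => Half (fsubst x t p)
  | Plus p q => Plus (fsubst x t p) (fsubst x t q)
  | Conj ps => Conj (fun n => fsubst x t (ps n))
  | Inf y p => if y == x then Inf y p else Inf y (fsubst x t p)
  end.

Fixpoint free_for (t : term) (x : nat) (phi : formula) : Prop :=
  match phi with
  | Atom _ => True
  | Neg p | Half p => free_for t x p
  | Plus p q => free_for t x p /\ free_for t x q
  | Conj ps => forall n, free_for t x (ps n)
  | Inf y p => ~ free x (Inf y p) \/ (~ occurs y t /\ free_for t x p)
  end.

Definition Conj2 (p q : formula) : formula :=
  Conj (fun n => if n is 0 then p else q).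

(* [withC = false]: formulas of L_{omega1,omega} (no new constants);
   [withC = true]:  formulas of L_{omega1,omega}(C). *)
Definition lang_term (withC : bool) t := withC \/ noC_term t.
Definition lang_atomic (withC : bool) a := withC \/ noC_atomic a.
Definition lang_form (withC : bool) phi := withC \/ noC_form phi.

Definition countable_set (S : formula -> Prop) :=
  exists g : nat -> formula, forall phi, S phi -> exists n, g n = phi.

Definition is_fragment (withC : bool) (S : formula -> Prop) : Prop :=
  [/\ countable_set S /\
      (forall phi, S phi -> lang_form withC phi),
      (forall a, lang_atomic withC a -> S (Atom a)),
      (forall p, S p -> S (Neg p) /\ S (Half p)) /\
      (forall p q, S p -> S q -> S (Plus p q) /\ S (Conj2 p q)) /\
      (forall x p, S p -> S (Inf x p)),
      (forall p, (S (Neg p) -> S p) /\ (S (Half p) -> S p)) /\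
      (forall p q, S (Plus p q) -> S p /\ S q) /\
      (forall ps, S (Conj ps) -> forall n, S (ps n)) /\
      (forall x p, S (Inf x p) -> S p)
    &
      forall x t p, S p -> lang_term withC t -> free_for t x p -> S (fsubst x t p)].

Definition LAC (LA : formula -> Prop) (phi : formula) : Prop :=
  forall S, is_fragment true S -> (forall psi, LA psi -> S psi) -> S phi.

Definition LAs (LA : formula -> Prop) (phi : formula) := LAC LA phi /\ sentence phi.

Definition atomic_sentence (a : atomic) := forall y, ~ occurs_atomic y a.

End Syntax.

Arguments TV {L}. Arguments TC {L}.

Section Forcing.
Variables (R : realType) (L : signature).
(* [delta a x] is the modulus of uniform continuity delta_{a,x} of the atomic
   formula a in the variable x, as given by the continuous signature. *)
Variable delta : atomic L -> nat -> R -> R.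
Variables (P : Type) (le : P -> P -> Prop) (f : P -> atomic L -> R).

Definition is_forcing_property : Prop :=
  [/\ (forall p, le p p) /\
      (forall p q r, le p q -> le q r -> le p r),
      (forall p q, le p q -> le q p -> p = q),
      (forall p a, atomic_sentence a -> 0 <= f p a <= 1),
      (forall p q a, le p q -> atomic_sentence a -> f p a <= f q a)
    &
      forall p (eps : R) (tau sigma : term L) (x : nat) (a : atomic L),
        0 < eps -> closed_term tau -> closed_term sigma ->
        (forall y, occurs_atomic y a -> y = x) ->
        exists q c, [/\ le q p,
          f q (AD tau (TC c)) < eps,
          f q (AD tau sigma) < f p (AD sigma tau) + eps
        & f p (AD tau sigma) < delta a x eps ->
          f q (asubst1 x sigma a) < f p (asubst1 x tau a) + eps]].

(* F_p(phi[s]) where s assigns terms to the variables; for a sentence phi,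
   [F phi TV p] is F_p(phi).  The inf_x clause reads inf_{c in C} F_p(phi(c)). *)
Fixpoint Fenv (phi : formula L) (s : nat -> term L) (p : P) : R :=
  match phi with
  | Atom a => f p (asubst s a)
  | Neg q => 1 - inf [set Fenv q s p' | p' in [set p' | le p' p]]
  | Half q => Fenv q s p / 2
  | Plus q1 q2 => Num.min (Fenv q1 s p + Fenv q2 s p) 1
  | Conj qs => inf [set Fenv (qs n) s p | n in [set: nat]]
  | Inf x q => inf [set Fenv q (update s x (TC c)) p | c in [set: nat]]
  end.

Definition F (p : P) (phi : formula L) : R := Fenv phi TV p.

Definition generic (LA : formula L -> Prop) (G : P -> Prop) : Prop :=
  [/\ exists p, G p,
      (forall p q, G p -> G q -> exists r, [/\ G r, le r p & le r q]),
      (forall p q, G p -> le p q -> G q)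
    & forall phi, LAs LA phi -> forall r : R, 1 < r ->
        exists p, G p /\ F p phi + F p (Neg phi) < r].

Definition valG (G : P -> Prop) (phi : formula L) : R := inf [set F p phi | p in G].

End Forcing.

From Pilot Require Import Defs.
From HB Require Import structures.
From mathcomp Require Import all_boot all_order all_algebra.
From mathcomp Require Import classical_sets reals.
Set Implicit Arguments. Unset Strict Implicit. Unset Printing Implicit Defensive.
Import Order.TTheory GRing.Theory Num.Theory.
Local Open Scope classical_set_scope.
Local Open Scope ring_scope.

(* Every [F_p] is a [[0,1]]-valued and monotone function of [p], by induction on
   the formula.  If [p] lies in [G] with [F_p phi + F_p (~phi) < r], then
   [(~phi)^G <= F_p (~phi) < r - F_p phi <= r - phi^G], so letting [r] tend to [1]
   gives [(~phi)^G <= 1 - phi^G].  Conversely, for [p, q] in [G] a common lower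
   bound [r] in [G] gives [inf_{p' <= p} F_p' phi <= F_r phi <= F_q phi], hence
   [F_p (~phi) >= 1 - phi^G]. *)

Section Closing.
Variable L : signature.

Lemma occurs_tsubst (s : nat -> term L) y t :
  occurs y (tsubst s t) -> exists2 z, occurs z t & occurs y (s z).
Proof.
elim: t => [z|i|g ts IH] //=; first by exists z.
by case=> i /IH [z hz hy]; exists z => //; exists i.
Qed.

Definition closing (s : nat -> term L) (q : formula L) :=
  forall z, Defs.free z q -> closed_term (s z).

Lemma atomic_sentence_asubst (s : nat -> term L) a :
  closing s (Atom a) -> atomic_sentence (asubst s a).
Proof.
case: a => [t1 t2|r ts] hs y /=.
- case=> /occurs_tsubst [z hz hy].
  + exact: (hs z (or_introl hz) y hy).
  + exact: (hs z (or_intror hz) y hy).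
- by case=> i /occurs_tsubst [z hz hy]; apply: (hs z _ y hy); exists i.
Qed.

Lemma closing_Plusl s q1 q2 : closing s (Plus q1 q2) -> closing s q1.
Proof. by move=> hs z hz; apply: hs; left. Qed.

Lemma closing_Plusr s q1 q2 : closing s (Plus q1 q2) -> closing s q2.
Proof. by move=> hs z hz; apply: hs; right. Qed.

Lemma closing_Conj s qs n : closing s (Conj qs) -> closing s (qs n).
Proof. by move=> hs z hz; apply: hs; exists n. Qed.

Lemma closing_update s x q c : closing s (Inf x q) -> closing (update s x (TC c)) q.
Proof.
move=> hs z hz; rewrite /update; case: eqP => [_ y //|hzx].
by apply: hs; split => // hxz; apply: hzx.
Qed.

Lemma sentence_closing q : sentence q -> closing TV q.
Proof. by move=> hq z /hq. Qed.

End Closing.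

Section InfImage.
Variable R : realType.

Lemma inf_image_le {T} (A : set T) (h : T -> R) x :
  (forall y, A y -> 0 <= h y) -> A x -> inf [set h y | y in A] <= h x.
Proof.
move=> h0 Ax; apply: ge_inf; last by exists x.
by exists 0 => _ [y Ay <-]; apply: h0.
Qed.

Lemma inf_image_itv01 {T} (A : set T) (h : T -> R) :
  A !=set0 -> (forall y, A y -> 0 <= h y <= 1) -> 0 <= inf [set h y | y in A] <= 1.
Proof.
move=> [x Ax] h01; apply/andP; split.
- by apply: lb_le_inf; [exists (h x), x | move=> _ [y /h01 /andP[] ? _ <-]].
- have h0 y : A y -> 0 <= h y by move=> /h01 /andP[].
  by apply: le_trans (inf_image_le h0 Ax) _; case/andP: (h01 x Ax).
Qed.

End InfImage.

Section Forcing.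
Variables (R : realType) (L : signature) (P : Type) (le : P -> P -> Prop).
Variable f : P -> atomic L -> R.
Hypothesis leP_refl : forall p, le p p.
Hypothesis leP_trans : forall p q r, le p q -> le q r -> le p r.
Hypothesis f_itv01 : forall p a, atomic_sentence a -> 0 <= f p a <= 1.
Hypothesis f_homo : forall p q a, le p q -> atomic_sentence a -> f p a <= f q a.

Lemma Fenv_itv01 q s p : closing s q -> 0 <= Fenv le f q s p <= 1.
Proof.
elim: q s p => [a|q IH|q IH|q1 IH1 q2 IH2|qs IH|x q IH] s p hs /=.
- exact/f_itv01/atomic_sentence_asubst.
- have /andP[h0 h1] : 0 <= inf [set Fenv le f q s p' | p' in [set p' | le p' p]] <= 1.
    by apply: inf_image_itv01 => [|p' _]; [exists p | exact: IH].
  by rewrite subr_ge0 h1 lerBlDr lerDl.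
- have /andP[h0 h1] := IH s p hs.
  by rewrite divr_ge0 //= ler_pdivrMr // mul1r (le_trans h1) // ler1n.
- have /andP[a0 _] := IH1 s p (closing_Plusl hs).
  have /andP[b0 _] := IH2 s p (closing_Plusr hs).
  by rewrite le_min addr_ge0 // ler01 ge_min lexx orbT.
- apply: inf_image_itv01 => [|n _]; first by exists 0%N.
  exact/IH/closing_Conj.
- apply: inf_image_itv01 => [|c _]; first by exists 0%N.
  exact/IH/closing_update.
Qed.

Lemma Fenv_homo q s p1 p2 :
  closing s q -> le p1 p2 -> Fenv le f q s p1 <= Fenv le f q s p2.
Proof.
have Fenv_ge0 q' s' p : closing s' q' -> 0 <= Fenv le f q' s' p.
  by move=> hs; case/andP: (Fenv_itv01 p hs).
elim: q s p1 p2 => [a|q IH|q IH|q1 IH1 q2 IH2|qs IH|x q IH] s p1 p2 hs h12 /=.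
- exact/f_homo/atomic_sentence_asubst.
- rewrite lerD2l lerN2; apply: lb_le_inf => [|_ [p' hp' <-]]; first by exists (Fenv le f q s p1), p1.
  by apply: inf_image_le => [p'' _|]; [exact: Fenv_ge0 | exact: leP_trans h12].
- by rewrite ler_pM2r ?invr_gt0 //; apply: IH.
- rewrite le_min !ge_min lexx orbT andbT lerD //.
  + exact: IH1 (closing_Plusl hs) h12.
  + exact: IH2 (closing_Plusr hs) h12.
- apply: lb_le_inf => [|_ [n _ <-]]; first by exists (Fenv le f (qs 0%N) s p2), 0%N.
  apply: le_trans (IH n s p1 p2 (closing_Conj hs) h12).
  by apply: inf_image_le => // m _; exact/Fenv_ge0/closing_Conj.
- apply: lb_le_inf => [|_ [c _ <-]]; first by exists (Fenv le f q (update s x (TC 0%N)) p2), 0%N.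
  apply: le_trans (IH _ p1 p2 (closing_update hs) h12).
  by apply: inf_image_le => // m _; exact/Fenv_ge0/closing_update.
Qed.

Variable G : P -> Prop.
Hypothesis G_directed : forall p q, G p -> G q -> exists r, [/\ G r, le r p & le r q].
Variable phi : formula L.
Hypothesis phi_sentence : sentence phi.

Lemma F_ge0 p : 0 <= F le f p phi.
Proof. by case/andP: (Fenv_itv01 p (sentence_closing phi_sentence)). Qed.

Lemma valG_le_F p : G p -> valG le f G phi <= F le f p phi.
Proof. by apply: inf_image_le => q _; exact: F_ge0. Qed.

Lemma F_Neg_ge0 p : 0 <= F le f p (Neg phi).
Proof.
by case/andP: (Fenv_itv01 (q:=Neg phi) p (sentence_closing phi_sentence)).
Qed.

Lemma valG_Neg_le_F p : G p -> valG le f G (Neg phi) <= F le f p (Neg phi).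
Proof. by apply: inf_image_le => q _; exact: F_Neg_ge0. Qed.

Lemma valG_Neg_le (r : R) p : G p -> F le f p phi + F le f p (Neg phi) < r ->
  valG le f G (Neg phi) <= r - valG le f G phi.
Proof.
move=> Gp hp; apply: le_trans (valG_Neg_le_F Gp) _.
rewrite lerBrDr addrC; apply: le_trans (ltW hp).
by rewrite lerD2r; exact: valG_le_F.
Qed.

Lemma valG_Neg_ge : G !=set0 -> 1 - valG le f G phi <= valG le f G (Neg phi).
Proof.
move=> [g0 Gg0]; apply: lb_le_inf => [|_ [p Gp <-]]; first by exists (F le f g0 (Neg phi)), g0.
rewrite /F /= lerD2l lerN2.
apply: lb_le_inf => [|_ [q Gq <-]]; first by exists (F le f g0 phi), g0.
have [r [Gr hrp hrq]] := G_directed Gp Gq.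
apply: le_trans (inf_image_le _ hrp) _ => [p' _|]; first exact: F_ge0.
exact: Fenv_homo (sentence_closing phi_sentence) hrq.
Qed.

End Forcing.

Theorem lemma2p14 (R : realType) (L : signature) (LA : formula L -> Prop)
    (delta : atomic L -> nat -> R -> R) (P : Type) (le : P -> P -> Prop)
    (f : P -> atomic L -> R) (G : P -> Prop) :
  countable_sig L ->
  is_fragment false LA ->
  (forall (a : atomic L) (x : nat) (e : R), 0 < e -> 0 < delta a x e) ->
  is_forcing_property delta le f ->
  generic le f LA G ->
  forall phi : formula L, LAs LA phi ->
    valG le f G (Neg phi) = 1 - valG le f G phi.
Proof.
move=> _ _ _ [[leP_refl leP_trans] _ f_itv01 f_homo _] [G0 G_dir _ G_gen] phi hphi.
have phi_sent : sentence phi by case: hphi.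
apply/eqP; rewrite eq_le; apply/andP; split.
- apply/ler_addgt0Pr => e e_gt0.
  have [p [Gp hp]] : exists p, G p /\ F le f p phi + F le f p (Neg phi) < 1 + e.
    by apply: G_gen; rewrite ?ltrDl.
  by rewrite addrAC; exact: valG_Neg_le hp.
- exact: valG_Neg_ge.
Qed.
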